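(* Let $d\ge2$ and, for $\ell\ge0$, let $P_\ell:[-1,1]\to\mathbb R$ be the Legendre polynomial of degree $\ell$ in dimension $d$, normalized by $P_\ell(1)=1$. Let $\lambda_\ell=\ell(d+\ell-2)$. Then for all $x\in[-1,1]$ and all integers $\ell\ge1$, \[ 1-P_{2\ell}(x)\le\frac{\lambda_{2\ell}}{\lambda_2}\big(1-P_2(x)\big). \]
   Context: The Legendre polynomial $P_\ell$ in dimension $d$ is the polynomial such that $\sigma\mapsto P_\ell(e_1\cdot\sigma)$ is the unique spherical harmonic of degree $\ell$ on $S^{d-1}$ (restriction of an $\ell$-homogeneous harmonic polynomial on $\mathbb R^d$) invariant under rotations fixing $e_1$ with value $1$ at $e_1$; for $d=2$, $P_\ell(\cos\theta)=\cos(\ell\theta)$. Then $-\Delta_{S^{d-1}}Y=\lambda_\ell Y$ for $Y(\sigma)=P_\ell(e_1\cdot\sigma)$. *)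

From mathcomp Require Import all_boot all_order all_algebra.
From mathcomp Require Import reals.
Set Implicit Arguments. Unset Strict Implicit. Unset Printing Implicit Defensive.
Import Order.TTheory GRing.Theory Num.Theory.
Local Open Scope ring_scope.

(* Legendre polynomials in dimension d (normalized by P_l(1) = 1), given by
   the standard three-term recurrence (l >= 1):
     (l + d - 2) P_{l+1} = (2 l + d - 2) X P_l - l P_{l-1},
   with P_0 = 1, P_1 = X.  For d = 2 this gives the Chebyshev polynomials
   P_l(cos t) = cos(l t); for d = 3 the classical Legendre polynomials. *)

Section Legendre.
Variable R : realType.

(* leg_pair d n = (P_n, P_{n+1}) *)
Fixpoint leg_pair (d n : nat) : {poly R} * {poly R} :=
  match n with
  | 0%N => (1, 'X)
  | n'.+1 =>
      let p := leg_pair d n' in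
      (p.2, ((n' + d - 1)%:R)^-1 *:
              (((2 * n' + d)%:R) *: ('X * p.2) - (n'.+1)%:R *: p.1))
  end.

Definition legendre (d l : nat) : {poly R} := (leg_pair d l).1.

Definition leg_lambda (d l : nat) : R := (l * (d + l - 2))%:R.

End Legendre.

From mathcomp Require Import all_boot all_order all_algebra.
From mathcomp Require Import reals.
From mathcomp Require Import polyrcf ring lra zify.
Set Implicit Arguments. Unset Strict Implicit. Unset Printing Implicit Defensive.
Import Order.TTheory GRing.Theory Num.Theory.
Local Open Scope ring_scope.

(* Write d = k + 2, P = P_{2l} and lam = lambda_{2l}.  The right-hand side
   equals (lam / (2 (k + 1))) (1 - x^2), and P' = X V for a polynomial V since
   P is even.  By evenness we may take x >= 0; integrating P' = X V from x
   to 1, it suffices that V <= V(1) = lam / (k + 1) on [0, 1].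
   Differentiating the Legendre equation gives a second-order equation for V,
   along which the Sonin-type function S = (lam - lambda_2) V^2 + (1 - X^2) V'^2
   decreases and then increases on [0, 1].  Hence
   (lam - lambda_2) V^2 <= S <= max (S(0), S(1)), where
   S(0) = (lam - lambda_2) V(0)^2 because V'(0) = 0,
   S(1) = (lam - lambda_2) V(1)^2, and |V(0)| = lam |P(0)| <= lam / (k + 1) = V(1)
   because |P_{2j}(0)| decreases with j.  For l = 1 both sides are equal. *)

Lemma horner_natr (R : nzRingType) n (x : R) : (n%:R : {poly R}).[x] = n%:R.
Proof. by rewrite -polyC_natr hornerC. Qed.

Ltac horner_eval :=
  rewrite ?(horner_exp, hornerD, hornerN, hornerM, hornerX, hornerC, horner_natr).

Section RealClosedPoly.
Variable R : rcfType.

Lemma horner_le_max_valley (p : {poly R}) (a b c x : R) :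
  (forall y, a < y < b -> y <= c -> p^`().[y] <= 0) ->
  (forall y, a < y < b -> c <= y -> 0 <= p^`().[y]) ->
  a <= x <= b -> p.[x] <= Num.max p.[a] p.[b].
Proof.
move=> p'_le0 p'_ge0 /andP[ax xb]; rewrite le_max.
have [xc|cx] := lerP x c.
- suff : (- p).[a] <= (- p).[x] by rewrite !hornerN lerN2 => ->.
  apply: (@ler_hornerW _ a x); rewrite ?in_itv /= ?lexx ?ax // => y.
  rewrite in_itv /= => /andP[ay yx]; rewrite derivN hornerN oppr_ge0 p'_le0 ?ay //=.
    exact: lt_le_trans yx xb.
  exact: ltW (lt_le_trans yx xc).
- apply/orP; right; apply: (@ler_hornerW _ x b); rewrite ?in_itv /= ?lexx ?xb // => y.
  rewrite in_itv /= => /andP[xy yb]; rewrite p'_ge0 ?yb ?(le_lt_trans ax xy) //.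
  exact: ltW (lt_trans cx xy).
Qed.

Lemma horner_sub_le_of_deriv_mulX (p V : {poly R}) (x : R) :
  p^`() = V * 'X -> (forall y, 0 < y < 1 -> V.[y] <= V.[1]) -> 0 <= x <= 1 ->
  p.[1] - p.[x] <= V.[1] / 2 * (1 - x ^+ 2).
Proof.
move=> p'E V_le /andP[x0 x1].
pose g := 2%:R * p - V.[1]%:P * 'X^2.
have g'E : g^`() = 2%:R * (V - V.[1]%:P) * 'X.
  by rewrite /g !derivE p'E; ring.
have : (- g).[x] <= (- g).[1].
  apply: (@ler_hornerW _ x 1); rewrite ?in_itv /= ?lexx ?x1 // => y.
  rewrite in_itv /= => /andP[xy y1].
  have y0 : 0 < y := le_lt_trans x0 xy.
  rewrite derivN g'E; horner_eval; rewrite oppr_ge0 mulr_le0_ge0 ?(ltW y0) //.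
  by rewrite mulr_ge0_le0 ?subr_le0 ?V_le ?y0 ?y1 //; lra.
by rewrite /g; horner_eval; rewrite expr1n; lra.
Qed.

Definition sonin (nu : R) (V : {poly R}) : {poly R} :=
  nu%:P * V ^+ 2 + (1 - 'X^2) * V^`() ^+ 2.

Section Sonin.
Variables (k : nat) (nu : R) (V : {poly R}).
Hypothesis V_ode : 'X * ((1 - 'X^2) * V^`()^`() - (k + 5)%:R * ('X * V^`())
  + nu%:P * V) + 2%:R * V^`() = 0.

Lemma X_deriv_sonin :
  'X * (sonin nu V)^`() = 2%:R * V^`() ^+ 2 * ((k + 4)%:R * 'X^2 - 2%:R).
Proof.
apply: subr0_eq; rewrite -(mulr0 (2%:R * V^`())) -[in RHS]V_ode /sonin !derivE.
ring.
Qed.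

Lemma sonin_deriv0 : V^`().[0] = 0.
Proof.
by have := congr1 (horner^~ 0) V_ode; horner_eval; rewrite expr0n /=; lra.
Qed.

Lemma horner_sonin y :
  (sonin nu V).[y] = nu * V.[y] ^+ 2 + (1 - y ^+ 2) * V^`().[y] ^+ 2.
Proof. by rewrite /sonin; horner_eval. Qed.

Lemma sonin_sqr_le_max (x : R) : 0 < nu -> 0 <= x <= 1 ->
  V.[x] ^+ 2 <= Num.max (V.[0] ^+ 2) (V.[1] ^+ 2).
Proof.
move=> nu_gt0 /andP[x0 x1]; set S := sonin nu V.
have k4_gt0 : (0 : R) < (k + 4)%:R by rewrite ltr0n addn4.
pose c : R := Num.sqrt (2%:R / (k + 4)%:R).
have c_ge0 : 0 <= c := sqrtr_ge0 _.
have sqr_c : c ^+ 2 = 2%:R / (k + 4)%:R by rewrite sqr_sqrtr ?divr_ge0 ?ler0n.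
have le_c y : 0 <= y -> (y <= c) = ((k + 4)%:R * y ^+ 2 <= 2%:R).
  by move=> y0; rewrite -[y <= c]ler_sqr ?nnegrE // sqr_c ler_pdivlMr // mulrC.
have ge_c y : 0 <= y -> (c <= y) = (2%:R <= (k + 4)%:R * y ^+ 2).
  by move=> y0; rewrite -[c <= y]ler_sqr ?nnegrE // sqr_c ler_pdivrMr // mulrC.
have S'_sign y :
    y * S^`().[y] = 2%:R * V^`().[y] ^+ 2 * ((k + 4)%:R * y ^+ 2 - 2%:R).
  by have := congr1 (horner^~ y) X_deriv_sonin; horner_eval.
have : S.[x] <= Num.max S.[0] S.[1].
  apply: (@horner_le_max_valley S 0 1 c x); rewrite ?x0 ?x1 // => y /andP[y0 _] yc;
    have V'2_ge0 : 0 <= 2%:R * V^`().[y] ^+ 2 by rewrite mulr_ge0 ?ler0n ?sqr_ge0.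
  - by rewrite -(pmulr_rle0 _ y0) S'_sign mulr_ge0_le0 // subr_le0 -le_c // ltW.
  - by rewrite -(pmulr_rge0 _ y0) S'_sign mulr_ge0 // subr_ge0 -ge_c // ltW.
rewrite !horner_sonin sonin_deriv0 expr1n subrr expr0n /= !(mulr0, mul0r, addr0).
rewrite -(maxr_pMr _ _ (ltW nu_gt0)) => S_le.
rewrite -(ler_pM2l nu_gt0) (le_trans _ S_le) //.
by rewrite lerDl mulr_ge0 ?sqr_ge0 // subr_ge0 exprn_ile1.
Qed.

End Sonin.

End RealClosedPoly.

Section LegendreDimension.
Variables (R : realType) (k : nat).
Local Notation P n := (legendre R k.+2 n).

Lemma legendre_rec n : (n + k + 1)%:R * P n.+2 =
  (2 * n + k + 2)%:R * ('X * P n.+1) - (n + 1)%:R * P n.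
Proof.
rewrite /legendre /=.
have -> : (n + k.+2 - 1 = n + k + 1)%N by lia.
have -> : (2 * n + k.+2 = 2 * n + k + 2)%N by lia.
rewrite -polyC_natr mul_polyC scalerA mulfV ?scale1r ?pnatr_eq0 ?addn1 //.
by rewrite !scaler_nat !mulr_natl.
Qed.

Lemma horner_legendre_rec n x : (n + k + 1)%:R * (P n.+2).[x] =
  (2 * n + k + 2)%:R * (x * (P n.+1).[x]) - (n + 1)%:R * (P n).[x].
Proof. by have := congr1 (horner^~ x) (legendre_rec n); horner_eval. Qed.

Lemma polyC_natr_neq0 (m : nat) : (0 < m)%N -> (m%:R : {poly R}) != 0.
Proof. by move=> m_gt0; rewrite -polyC_natr polyC_eq0 pnatr_eq0 -lt0n. Qed.

Lemma legendre_deriv_rel m :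
  (1 - 'X^2) * (P m.+1)^`() = (m + 1)%:R * (P m - 'X * P m.+1) /\
  (1 - 'X^2) * (P m)^`() = (m + k)%:R * ('X * P m - P m.+1).
Proof.
elim: m => [|m [IHpred IHsucc]].
  by rewrite /legendre /= derivX derivC; split; ring.
move: (legendre_rec m) IHpred IHsucc.
move: (P m) (P m.+1) (P m.+2) => p0 p1 p2 rec IHpred IHsucc.
have rec' : (m + k + 1)%:R * p2^`() =
    (2 * m + k + 2)%:R * (p1 + 'X * p1^`()) - (m + 1)%:R * p0^`().
  by have := congr1 deriv rec; rewrite !mulr_natl !derivE mul1r => ->.
split.
  apply: (mulfI (@polyC_natr_neq0 (m + k + 1) _)); first by rewrite addn1.
  have -> : (m + k + 1)%:R * ((1 - 'X^2) * p2^`()) =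
    (1 - 'X^2) * ((m + k + 1)%:R * p2^`()) by ring.
  have -> : (m + k + 1)%:R * ((m.+1 + 1)%:R * (p1 - 'X * p2)) =
    (m.+1 + 1)%:R * ((m + k + 1)%:R * p1 - 'X * ((m + k + 1)%:R * p2)) by ring.
  rewrite rec' rec.
  have -> : (1 - 'X^2) * ((2 * m + k + 2)%:R * (p1 + 'X * p1^`()) -
     (m + 1)%:R * p0^`()) =
     (2 * m + k + 2)%:R * ((1 - 'X^2) * p1 + 'X * ((1 - 'X^2) * p1^`()))
     - (m + 1)%:R * ((1 - 'X^2) * p0^`()) by ring.
  by rewrite IHpred IHsucc; ring.
have -> : (m.+1 + k)%:R * ('X * p1 - p2) =
  (m.+1 + k)%:R * ('X * p1) - (m + k + 1)%:R * p2 by ring.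
by rewrite IHpred rec; ring.
Qed.

Lemma legendre_deriv_pred m :
  (1 - 'X^2) * (P m.+1)^`() = (m + 1)%:R * (P m - 'X * P m.+1).
Proof. exact: (legendre_deriv_rel m).1. Qed.

Lemma legendre_deriv_succ m :
  (1 - 'X^2) * (P m)^`() = (m + k)%:R * ('X * P m - P m.+1).
Proof. exact: (legendre_deriv_rel m).2. Qed.

Lemma legendre_at1 n : (P n).[1] = 1.
Proof.
elim: n => [|m IH]; first by rewrite /legendre /=; horner_eval.
have := congr1 (horner^~ 1) (legendre_deriv_pred m); horner_eval.
rewrite IH expr1n subrr mul0r mul1r => /esym/eqP.
by rewrite mulf_eq0 pnatr_eq0 addn1 /= subr_eq0 => /eqP <-.
Qed.

Lemma one_subX2_neq0 : (1 - 'X^2 : {poly R}) != 0.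
Proof.
apply/negP => /eqP /(congr1 (horner^~ 0)); horner_eval.
by rewrite expr0n subr0 => /eqP; rewrite oner_eq0.
Qed.

Lemma legendre_ode n : (1 - 'X^2) * (P n)^`()^`() - (k + 1)%:R * ('X * (P n)^`())
  + (n * (n + k))%:R * P n = 0.
Proof.
case: n => [|m]; first by rewrite /legendre /= !derivC; ring.
move: (legendre_deriv_pred m) (legendre_deriv_succ m).
move: (P m) (P m.+1) => p0 p1 pred succ.
have pred' : ((1 - 'X^2) * p1^`())^`() = (m + 1)%:R * (p0^`() - p1 - 'X * p1^`()).
  by rewrite pred !mulr_natl !derivE; ring.
apply: (mulfI one_subX2_neq0).
have -> : (1 - 'X^2) * ((1 - 'X^2) * p1^`()^`() - (k + 1)%:R * ('X * p1^`()) +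
    (m.+1 * (m.+1 + k))%:R * p1) =
  (1 - 'X^2) * (((1 - 'X^2) * p1^`())^`() -
      (m + 1)%:R * (p0^`() - p1 - 'X * p1^`()))
  + (m + 1)%:R * ((1 - 'X^2) * p0^`() - (m + k)%:R * ('X * p0 - p1))
  - (m + k)%:R * 'X * ((1 - 'X^2) * p1^`() - (m + 1)%:R * (p0 - 'X * p1)).
  by rewrite !derivE; ring.
by rewrite pred' succ pred !subrr; ring.
Qed.

Lemma legendre_parity n x : (P n).[- x] = (-1) ^+ n * (P n).[x].
Proof.
suff /(_ n)[] : forall n, (P n).[- x] = (-1) ^+ n * (P n).[x] /\
  (P n.+1).[- x] = (-1) ^+ n.+1 * (P n.+1).[x] by [].
elim=> [|m [IHm IHm1]]; first by rewrite /legendre /=; horner_eval; split; ring.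
split=> //; apply: (@mulfI _ (m + k + 1)%:R); first by rewrite pnatr_eq0 addn1.
rewrite horner_legendre_rec IHm IHm1 (mulrCA _ ((-1) ^+ m.+2)).
by rewrite horner_legendre_rec !exprS; ring.
Qed.

Lemma legendre_even n x : (P n.*2).[- x] = (P n.*2).[x].
Proof. by rewrite legendre_parity -signr_odd odd_double expr0 mul1r. Qed.

Lemma legendre_odd_at0 n : (P n.*2.+1).[0] = 0.
Proof.
have := legendre_parity n.*2.+1 0.
by rewrite oppr0 -signr_odd /= odd_double expr1; lra.
Qed.

Lemma legendre_even_deriv_at0 n : (P n.*2)^`().[0] = 0.
Proof.
have := congr1 (horner^~ 0) (legendre_deriv_succ n.*2); horner_eval.
by rewrite legendre_odd_at0 expr0n subr0 mul1r mul0r subrr mulr0.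
Qed.

Lemma horner_legendre2 x : (k + 1)%:R * (P 2).[x] = (k + 2)%:R * x ^+ 2 - 1.
Proof.
by rewrite -[k in (k + 1)%N]add0n horner_legendre_rec /legendre /=; horner_eval; ring.
Qed.

Lemma one_sub_legendre2 x : 1 - (P 2).[x] = (k + 2)%:R / (k + 1)%:R * (1 - x ^+ 2).
Proof.
have k1_neq0 : (k + 1)%:R != 0 :> R by rewrite pnatr_eq0 addn1.
apply: (mulfI k1_neq0); rewrite mulrBr mulr1 horner_legendre2; field.
by rewrite natr1 pnatr_eq0.
Qed.

Lemma legendre_at0_norm_le n : `|(P n.+2).[0]| <= `|(P n).[0]|.
Proof.
have := horner_legendre_rec n 0; rewrite mul0r mulr0 sub0r => /(congr1 Num.norm).
rewrite normrN !normrM !normr_nat => rec.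
have c_gt0 : (0 : R) < (n + k + 1)%:R by rewrite ltr0n addn1.
rewrite -(ler_pM2l c_gt0) rec.
by rewrite ler_wpM2r // ler_nat; lia.
Qed.

Lemma legendre_even_at0_bound n : (k + 1)%:R * `|(P n.+1.*2).[0]| <= 1.
Proof.
elim: n => [|n IH].
  rewrite -[(k + 1)%:R]ger0_norm ?ler0n // -normrM horner_legendre2.
  by rewrite expr0n mulr0 sub0r normrN normr1.
rewrite doubleS (le_trans _ IH) // ler_wpM2l ?ler0n //.
exact: legendre_at0_norm_le.
Qed.

Section EvenDerivQuotient.
Variables (l : nat) (V : {poly R}).
Hypothesis P'E : (P l.*2)^`() = V * 'X.
Let lam : R := (l.*2 * (l.*2 + k))%:R.

(* [2 * k + 4] is lambda_2, so the coefficient is positive exactly when l >= 2. *)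

Lemma legendre_deriv_quot_ode : 'X * ((1 - 'X^2) * V^`()^`() - (k + 5)%:R * ('X * V^`())
  + (lam - (2 * k + 4)%:R)%:P * V) + 2%:R * V^`() = 0.
Proof.
have := congr1 deriv (legendre_ode l.*2); rewrite derivC => <-.
rewrite /lam polyCB !polyC_natr !derivE P'E !derivE; ring.
Qed.

Lemma legendre_deriv_quot_at1 : (k + 1)%:R * V.[1] = lam.
Proof.
have := congr1 (horner^~ 1) (legendre_ode l.*2); rewrite P'E; horner_eval.
by rewrite legendre_at1 expr1n subrr; lra.
Qed.

Lemma legendre_deriv_quot_at0 : V.[0] = - lam * (P l.*2).[0].
Proof.
have := congr1 (horner^~ 0) (legendre_ode l.*2); rewrite P'E !derivE; horner_eval.
rewrite expr0n /=; lra.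
Qed.

Lemma legendre_deriv_quot_le_at1 y : (2 <= l)%N -> 0 <= y <= 1 -> V.[y] <= V.[1].
Proof.
move=> l_ge2 y01.
have k1_gt0 : (0 : R) < (k + 1)%:R by rewrite ltr0n addn1.
have V1_ge0 : 0 <= V.[1].
  by rewrite -(pmulr_rge0 _ k1_gt0) legendre_deriv_quot_at1 ler0n.
have nu_gt0 : 0 < lam - (2 * k + 4)%:R by rewrite subr_gt0 ltr_nat; nia.
have V0_le : `|V.[0]| <= V.[1].
  rewrite -(ler_pM2l k1_gt0) legendre_deriv_quot_at1 legendre_deriv_quot_at0.
  rewrite normrM normrN.
  rewrite [`|lam|]ger0_norm ?ler0n // mulrCA ger_pMr ?ltr0n; last by nia.
  by have := legendre_even_at0_bound l.-1; rewrite prednK // ltnW.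
have := sonin_sqr_le_max legendre_deriv_quot_ode nu_gt0 y01.
rewrite (max_idPr _); last by rewrite -real_normK ?num_real // ler_sqr ?nnegrE.
move=> Vy_le; apply: le_trans (ler_norm _) _.
by rewrite -ler_sqr ?nnegrE // real_normK ?num_real.
Qed.

End EvenDerivQuotient.

Lemma legendre_even_gap l x : (1 <= l)%N -> -1 <= x <= 1 ->
  1 - (P l.*2).[x] <= (l.*2 * (l.*2 + k))%:R / (2 * (k + 1))%:R * (1 - x ^+ 2).
Proof.
move=> l_ge1; wlog x_ge0 : x / 0 <= x.
  move=> gap /andP[x_ge x_le]; have [x0|x0] := lerP 0 x; first by rewrite gap ?x_ge.
  by rewrite -legendre_even -sqrrN gap ?oppr_ge0 ?(ltW x0) // lerN2 lerNl x_ge x_le.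
move=> /andP[_ x_le1].
case: l l_ge1 => [|[|l]] // _.
  rewrite one_sub_legendre2 le_eqVlt; apply/orP; left; apply/eqP.
  change 1.*2 with 2%N; rewrite !natrM !natrD; field.
  by rewrite natr1 pnatr_eq0.
have : root (P l.+2.*2)^`() 0 by apply/rootP; exact: legendre_even_deriv_at0.
case/factor_theorem => V; rewrite polyC0 subr0 => P'E.
have := horner_sub_le_of_deriv_mulX P'E _ (_ : 0 <= x <= 1).
rewrite legendre_at1 -(legendre_deriv_quot_at1 P'E) natrM (mulrC 2%:R) -mulf_div.
rewrite divff ?pnatr_eq0 ?addn1 // mul1r; apply; last by rewrite x_ge0.
by move=> y /andP[y0 y1]; apply: (legendre_deriv_quot_le_at1 P'E); rewrite // !ltW.
Qed.

Lemma leg_lambda_ratio n x :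
  leg_lambda R k.+2 n / leg_lambda R k.+2 2 * (1 - (P 2).[x]) =
  (n * (n + k))%:R / (2 * (k + 1))%:R * (1 - x ^+ 2).
Proof.
rewrite one_sub_legendre2 /leg_lambda.
have -> : (k.+2 + n - 2 = n + k)%N by lia.
have -> : (2 * (k.+2 + 2 - 2) = 2 * (k + 2))%N by lia.
have k_ge0 := ler0n R k.
by rewrite !natrM !natrD; field; rewrite !lt0r_neq0 //; lra.
Qed.

End LegendreDimension.

Theorem proposition7p5 (R : realType) (d : nat) (hd : (2 <= d)%N)
  (l : nat) (hl : (1 <= l)%N) (x : R) (hx : -1 <= x <= 1) :
  1 - (legendre R d (2 * l)).[x]
    <= leg_lambda R d (2 * l) / leg_lambda R d 2 * (1 - (legendre R d 2).[x]).
Proof.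
case: d hd => [|[|k]] // _.
by rewrite mul2n leg_lambda_ratio legendre_even_gap.
Qed.
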